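(* Let $G\le\mathrm{O}(d)$ be finite and let $z_1,\ldots,z_n\in\mathbb{R}^d$. Then the max filter bank $\Phi:\mathbb{R}^d/G\to\mathbb{R}^n$, $\Phi([x])=(\langle\!\langle[z_i],[x]\rangle\!\rangle)_{i=1}^n$, satisfies $$\sup_{\substack{[x],[y]\in\mathbb{R}^d/G\\ [x]\ne[y]}}\frac{\|\Phi([x])-\Phi([y])\|}{d([x],[y])}=\max\Big\{\big\|[\,g_1z_1\ \cdots\ g_nz_n\,]\big\|_{2\to2}\;:\;g_1,\ldots,g_n\in G,\ \textstyle\bigcap_{i=1}^n V_{g_iz_i}\ne\varnothing\Big\},$$ where $[\,g_1z_1\ \cdots\ g_nz_n\,]$ is the $d\times n$ matrix with columns $g_iz_i$.
   Context: For $x\in\mathbb{R}^d$, $[x]:=\{gx:g\in G\}$; $\mathbb{R}^d/G$ is the set of orbits with quotient metric $d([x],[y]):=\min_{p\in[x],q\in[y]}\|p-q\|$. Max filtering: $\langle\!\langle[x],[y]\rangle\!\rangle:=\max_{p\in[x],q\in[y]}\langle p,q\rangle$. The open Voronoi cell $V_x$ of $x$ is the set of $y\in\mathbb{R}^d$ such that $x$ is the unique maximizer of $\langle p,y\rangle$ over $p\in[x]$. $\|A\|_{2\to2}$ denotes the operator (spectral) norm. *)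

From HB Require Import structures.
From mathcomp Require Import all_boot all_order all_algebra.
From mathcomp Require Import boolp classical_sets reals.
Set Implicit Arguments. Unset Strict Implicit. Unset Printing Implicit Defensive.
Import Order.TTheory GRing.Theory Num.Theory.
Local Open Scope ring_scope.
Local Open Scope classical_set_scope.

Section MaxFilter.
Variable R : realType.

Definition dotv (k : nat) (u v : 'cV[R]_k) : R := \sum_(a < k) u a 0 * v a 0.
Definition enorm (k : nat) (v : 'cV[R]_k) : R := Num.sqrt (dotv v v).

Definition opnorm (m k : nat) (A : 'M[R]_(m, k)) : R :=
  sup [set enorm (A *m v) | v in [set v : 'cV[R]_k | enorm v <= 1]].

Definition is_finite_orth_group (d : nat) (G : seq 'M[R]_d) : Prop :=
  [/\ 1%:M \in G,
      (forall g h, g \in G -> h \in G -> g *m h \in G),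
      (forall g, g \in G -> g^T \in G) &
      (forall g, g \in G -> g^T *m g = 1%:M)].

Definition orbit (d : nat) (G : seq 'M[R]_d) (x : 'cV[R]_d) : set 'cV[R]_d :=
  [set g *m x | g in [set g | g \in G]].

(* quotient metric d([x],[y]) = min_{p in [x], q in [y]} ||p - q||
   (the sets are finite and nonempty, so inf = min) *)
Definition qdist (d : nat) (G : seq 'M[R]_d) (x y : 'cV[R]_d) : R :=
  inf [set r | exists p q : 'cV[R]_d, [/\ orbit G x p, orbit G y q & r = enorm (p - q)]].

Definition maxfilt (d : nat) (G : seq 'M[R]_d) (x y : 'cV[R]_d) : R :=
  sup [set r | exists p q : 'cV[R]_d, [/\ orbit G x p, orbit G y q & r = dotv p q]].

Definition voronoi (d : nat) (G : seq 'M[R]_d) (x : 'cV[R]_d) : set 'cV[R]_d :=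
  [set y | (forall p, orbit G x p -> dotv p y <= dotv x y) /\
           (forall p, orbit G x p -> dotv p y = dotv x y -> p = x)].

Definition Phi (d n : nat) (G : seq 'M[R]_d) (z : 'I_n -> 'cV[R]_d)
  (x : 'cV[R]_d) : 'cV[R]_n := \col_(i < n) maxfilt G (z i) x.

Definition lip_quotients (d n : nat) (G : seq 'M[R]_d) (z : 'I_n -> 'cV[R]_d)
  : set R :=
  [set r | exists x y : 'cV[R]_d, orbit G x <> orbit G y /\
     r = enorm (Phi G z x - Phi G z y) / qdist G x y].

Definition colmat (d n : nat) (g : 'I_n -> 'M[R]_d) (z : 'I_n -> 'cV[R]_d)
  : 'M[R]_(d, n) := \matrix_(a < d, i < n) (g i *m z i) a 0.

Definition admissible (d n : nat) (G : seq 'M[R]_d) (z : 'I_n -> 'cV[R]_d)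
  (g : 'I_n -> 'M[R]_d) : Prop :=
  (forall i, g i \in G) /\
  exists y : 'cV[R]_d, forall i, voronoi G (g i *m z i) y.

End MaxFilter.

(* Write A_g for the matrix [g_1 z_1 ... g_n z_n] and L for the largest ||A_g||
   over admissible g.
   Upper bound: on a segment from x to y, the maximizers of <_, p> over the
   orbits [z_i] can only change where p becomes orthogonal to one of the finitely
   many differences g z_i - h z_i.  Between two such breakpoints, a generic
   perturbation of the midpoint selects maximizers g_i z_i that remain maximizers
   on the whole piece and whose Voronoi cells intersect, so there Phi is linear
   with matrix A_g^T for an admissible g.  Summing over the pieces gives
   ||Phi y - Phi x|| <= L ||y - x||, and G-invariance of Phi improves this to
   L d([x], [y]).
   Lower bound: if y lies in every V_{g_i z_i}, the g_i z_i stay maximizers at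
   y + eta u for small eta > 0, so Phi (y + eta u) - Phi y = eta A_g^T u while
   d([y + eta u], [y]) <= eta ||u||; with u = A_g v this yields quotients of size
   at least ||A_g v|| for every v in the unit ball. *)

From Pilot Require Import Defs.
From HB Require Import structures.
From mathcomp Require Import all_boot all_order all_algebra.
From mathcomp Require Import boolp classical_sets reals.
From mathcomp Require Import ring lra.
Import Order.TTheory GRing.Theory Num.Theory.
Local Open Scope ring_scope.
Local Open Scope classical_set_scope.
Set Implicit Arguments. Unset Strict Implicit. Unset Printing Implicit Defensive.

Section EuclideanSpace.
Variables (R : realType) (k : nat).
Implicit Types (u v w : 'cV[R]_k) (c : R).

Lemma dotvC u v : dotv u v = dotv v u.
Proof. by apply: eq_bigr => a _; rewrite mulrC. Qed.

Lemma dotvDl u v w : dotv (u + v) w = dotv u w + dotv v w.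
Proof. by rewrite /dotv -big_split; apply: eq_bigr => a _; rewrite !mxE mulrDl. Qed.

Lemma dotvZl c u w : dotv (c *: u) w = c * dotv u w.
Proof. by rewrite /dotv mulr_sumr; apply: eq_bigr => a _; rewrite !mxE mulrA. Qed.

Lemma dotvNl u w : dotv (- u) w = - dotv u w.
Proof. by rewrite -scaleN1r dotvZl mulN1r. Qed.

Lemma dotvBl u v w : dotv (u - v) w = dotv u w - dotv v w.
Proof. by rewrite dotvDl dotvNl. Qed.

Lemma dotvDr u v w : dotv w (u + v) = dotv w u + dotv w v.
Proof. by rewrite dotvC dotvDl !(dotvC w). Qed.

Lemma dotvZr c u w : dotv w (c *: u) = c * dotv w u.
Proof. by rewrite dotvC dotvZl dotvC. Qed.

Lemma dotvBr u v w : dotv w (u - v) = dotv w u - dotv w v.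
Proof. by rewrite dotvC dotvBl !(dotvC w). Qed.

Lemma dotv0r w : dotv w 0 = 0.
Proof. by rewrite /dotv big1 // => a _; rewrite mxE mulr0. Qed.

Lemma dotv_ge0 u : 0 <= dotv u u.
Proof. by apply: sumr_ge0 => a _; rewrite -expr2 sqr_ge0. Qed.

Lemma dotv_eq0 u : (dotv u u == 0) = (u == 0).
Proof.
apply/idP/eqP => [|->]; last by rewrite dotv0r.
rewrite psumr_eq0 => [/allP u0|a _]; last by rewrite -expr2 sqr_ge0.
apply/matrixP => a b; rewrite (ord1 b) mxE.
by have /= := u0 a (mem_index_enum a); rewrite mulf_eq0 orbb => /eqP.
Qed.

Lemma cauchy_schwarz u v : dotv u v ^+ 2 <= dotv u u * dotv v v.
Proof.
have [->|vN0] := eqVneq v 0; first by rewrite !dotv0r expr0n mulr0.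
have vv_gt0 : 0 < dotv v v by rewrite lt_def dotv_eq0 vN0 dotv_ge0.
rewrite -subr_ge0 -(pmulr_rge0 _ vv_gt0).
have := dotv_ge0 (dotv v v *: u - dotv u v *: v).
by rewrite !(dotvBl, dotvBr, dotvZl, dotvZr) (dotvC v u); nra.
Qed.

Lemma enorm_ge0 u : 0 <= enorm u.
Proof. exact: sqrtr_ge0. Qed.

Lemma enorm_sq u : enorm u ^+ 2 = dotv u u.
Proof. by rewrite sqr_sqrtr // dotv_ge0. Qed.

Lemma enorm0 : enorm (0 : 'cV[R]_k) = 0.
Proof. by rewrite /enorm dotv0r sqrtr0. Qed.

Lemma enorm_eq0 u : (enorm u == 0) = (u == 0).
Proof. by rewrite -dotv_eq0 -enorm_sq sqrf_eq0. Qed.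

Lemma enormZ c u : enorm (c *: u) = `|c| * enorm u.
Proof.
by rewrite /enorm dotvZl dotvZr mulrA -expr2 sqrtrM ?sqr_ge0 // sqrtr_sqr.
Qed.

Lemma dotv_le_enorm u v : dotv u v <= enorm u * enorm v.
Proof.
apply: le_trans (ler_norm _) _.
rewrite -sqrtr_sqr -sqrtrM ?dotv_ge0 // ler_sqrt ?cauchy_schwarz //.
by rewrite mulr_ge0 ?dotv_ge0.
Qed.

Lemma enormD u v : enorm (u + v) <= enorm u + enorm v.
Proof.
rewrite -ler_sqr ?nnegrE ?addr_ge0 ?enorm_ge0 //.
rewrite enorm_sq sqrrD !enorm_sq dotvDl !dotvDr (dotvC v u).
by have := dotv_le_enorm u v; lra.
Qed.

End EuclideanSpace.

Section SupInf.
Variable R : realType.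
Implicit Types (E : set R) (x : R).

Lemma sup_greatest E x : E x -> ubound E x -> sup E = x.
Proof.
move=> Ex ubx; apply/le_anti/andP; split; first by apply: ge_sup => //; exists x.
by apply: ub_le_sup => //; exists x.
Qed.

Lemma inf_least E x : E x -> lbound E x -> inf E = x.
Proof.
move=> Ex lbx; apply/le_anti/andP; split; first by apply: ge_inf => //; exists x.
by apply: lb_le_inf => //; exists x.
Qed.

End SupInf.

Section OperatorNorm.
Variables (R : realType) (m k : nat).
Implicit Types (A : 'M[R]_(m, k)) (v : 'cV[R]_k).

Lemma dotv_mulmxl A v (u : 'cV[R]_m) : dotv (A *m v) u = dotv v (A^T *m u).
Proof.
rewrite /dotv; under eq_bigr => a _ do rewrite mxE mulr_suml.
rewrite exchange_big /=; apply: eq_bigr => b _.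
by rewrite mxE mulr_sumr; apply: eq_bigr => a _; rewrite !mxE; ring.
Qed.

Lemma opnorm_has_ubound A :
  has_ubound [set enorm (A *m v) | v in [set v | enorm v <= 1]].
Proof.
pose row_sq := \sum_(a < m) dotv (\col_j A a j) (\col_j A a j).
exists (Num.sqrt row_sq) => _ [v /= v_le1 <-].
have vv_le1 : dotv v v <= 1 by rewrite -enorm_sq -(expr1n _ 2) ler_sqr ?nnegrE ?enorm_ge0.
rewrite ler_sqrt; last by apply: sumr_ge0 => a _; apply: dotv_ge0.
apply: ler_sum => a _.
have -> : (A *m v) a 0 = dotv (\col_j A a j) v.
  by rewrite mxE; apply: eq_bigr => j _; rewrite mxE.
rewrite -expr2; apply: le_trans (cauchy_schwarz _ _) _.
by rewrite ler_piMr ?dotv_ge0.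
Qed.

Lemma opnorm_ge0 A : 0 <= opnorm A.
Proof.
apply: le_trans (enorm_ge0 (A *m 0)) (ub_le_sup (opnorm_has_ubound A) _).
by exists 0; rewrite //= enorm0 ler01.
Qed.

Lemma opnorm_le_ub A M :
  (forall v, enorm v <= 1 -> enorm (A *m v) <= M) -> opnorm A <= M.
Proof.
move=> A_le; apply: ge_sup; first by exists (enorm (A *m 0)), 0; rewrite //= enorm0 ler01.
by move=> _ [v /A_le ? <-].
Qed.

Lemma enorm_mulmx_le A v : enorm (A *m v) <= opnorm A * enorm v.
Proof.
have [->|vN0] := eqVneq v 0; first by rewrite mulmx0 !enorm0 mulr0.
have v_gt0 : 0 < enorm v by rewrite lt_def enorm_eq0 vN0 enorm_ge0.
rewrite mulrC -ler_pdivrMl //.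
have := ub_le_sup (opnorm_has_ubound A) (ex_intro2 _ _ ((enorm v)^-1 *: v) _ erefl).
rewrite -scalemxAr enormZ ger0_norm ?invr_ge0 ?enorm_ge0 //; apply.
by rewrite /= enormZ ger0_norm ?invr_ge0 ?enorm_ge0 // mulVf ?gt_eqF.
Qed.

Lemma enorm_trmx_mulmx_le A (u : 'cV[R]_m) :
  enorm (A^T *m u) <= opnorm A * enorm u.
Proof.
have [ATu0|ATuN0] := eqVneq (enorm (A^T *m u)) 0.
  by rewrite ATu0 mulr_ge0 ?opnorm_ge0 ?enorm_ge0.
have ATu_gt0 : 0 < enorm (A^T *m u) by rewrite lt_def ATuN0 enorm_ge0.
rewrite -(ler_pM2r ATu_gt0) -expr2 enorm_sq -dotv_mulmxl dotvC.
apply: le_trans (dotv_le_enorm _ _) _.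
by rewrite (mulrC (opnorm A)) -mulrA ler_wpM2l ?enorm_ge0 // enorm_mulmx_le.
Qed.

Lemma enorm_mulmx_sqr_le A v :
  enorm v <= 1 -> enorm (A *m v) ^+ 2 <= enorm (A^T *m (A *m v)).
Proof.
move=> v_le1; rewrite enorm_sq dotv_mulmxl.
by apply: le_trans (dotv_le_enorm _ _) _; rewrite ler_piMl ?enorm_ge0.
Qed.

End OperatorNorm.

Section Perturbation.
Variables (R : realType) (k : nat).
Implicit Types (S : seq 'cV[R]_k) (y u : 'cV[R]_k).

Lemma dotv_perturb_small S y u : exists2 eta : R, 0 < eta &
  forall a, a \in S -> dotv a y != 0 -> eta * `|dotv a u| < `|dotv a y|.
Proof.
elim: S => [|b S [eta eta_gt0 small]]; first by exists 1.
have [by0|byN0] := eqVneq (dotv b y) 0.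
  by exists eta => // a; rewrite inE => /predU1P[->|/small//]; rewrite by0 eqxx.
set eta_b := `|dotv b y| / (`|dotv b u| + 1).
have eta_b_gt0 : 0 < eta_b by rewrite divr_gt0 ?normr_gt0 ?ltr_wpDl.
exists (Num.min eta eta_b) => [|a]; first by rewrite lt_min eta_gt0.
rewrite inE => /predU1P[-> _|/small a_small /a_small]; last first.
  by apply: le_lt_trans; rewrite ler_wpM2r // ge_min lexx.
apply: (@le_lt_trans _ _ (eta_b * `|dotv b u|)).
  by rewrite ler_wpM2r // ge_min lexx orbT.
rewrite /eta_b mulrAC ltr_pdivrMr ?ltr_wpDl // ltr_pM2l ?normr_gt0 //.
by rewrite ltrDl ltr01.
Qed.

Lemma dotv_perturb_sign S y u : exists2 eta : R, 0 < eta &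
  forall a, a \in S -> (dotv a y < 0 -> dotv a (y + eta *: u) < 0) /\
                       (0 < dotv a y -> 0 < dotv a (y + eta *: u)).
Proof.
have [eta eta_gt0 small] := dotv_perturb_small S y u.
exists eta => // a a_in; rewrite dotvDr dotvZr.
have small_a : dotv a y != 0 -> `|eta * dotv a u| < `|dotv a y|.
  by move=> ay_N0; rewrite normrM (gtr0_norm eta_gt0) small.
split=> [ay_lt0|ay_gt0].
  by move: (small_a (ltr0_neq0 ay_lt0)); rewrite (ltr0_norm ay_lt0) ltr_norml; lra.
by move: (small_a (lt0r_neq0 ay_gt0)); rewrite (gtr0_norm ay_gt0) ltr_norml; lra.
Qed.

Lemma generic_direction S : exists w, forall a, a \in S -> a != 0 -> dotv a w != 0.
Proof.
elim: S => [|b S [w w_gen]]; first by exists 0.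
have [bw0|bwN0] := eqVneq (dotv b w) 0; last first.
  by exists w => a; rewrite inE => /predU1P[->|/w_gen].
have [eta eta_gt0 sign] := dotv_perturb_sign S w b.
exists (w + eta *: b) => a; rewrite inE => /predU1P[-> bN0|a_in aN0].
  by rewrite dotvDr dotvZr bw0 add0r mulf_eq0 negb_or gt_eqF // dotv_eq0.
move: (w_gen a a_in aN0); rewrite neq_lt => /orP[/(sign a a_in).1|/(sign a a_in).2].
  exact: ltr0_neq0.
exact: lt0r_neq0.
Qed.

End Perturbation.

Section PiecewiseLipschitz.
Variable R : realType.

Lemma affine_nonpos_between (u c s m t r : R) :
  s < m < t -> s <= r <= t -> (c != 0 -> ~~ (s < - u / c < t)) ->
  u + m * c <= 0 -> u + r * c <= 0.
Proof.
move=> /andP[sm mt] /andP[sr rt] no_root.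
have [->|cN0] := eqVneq c 0; first by rewrite !mulr0.
move: (no_root cN0); rewrite negb_and -!leNgt.
have u_eq : u = - (- u / c) * c by rewrite mulNr divfK ?opprK.
move: (- u / c) u_eq => root -> root_out.
rewrite -!mulrDl; move: cN0; rewrite neq_lt => /orP[c_lt0|c_gt0].
  by rewrite !nmulr_lle0 //; case/orP: root_out; lra.
by rewrite !pmulr_lle0 //; case/orP: root_out; lra.
Qed.

Lemma enorm_sub_le_piecewise k (f : R -> 'cV[R]_k) (C : seq R) (K : R) :
  (forall s t, s <= t -> {in C, forall c, ~~ (s < c < t)} ->
     enorm (f t - f s) <= (t - s) * K) ->
  forall s t, s <= t -> enorm (f t - f s) <= (t - s) * K.
Proof.
elim: C => [|c C IH] f_seg; first by move=> s t st; apply: f_seg.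
apply: IH => s t st noC.
have [/andP[sc ct]|c_out] := boolP (s < c < t); last first.
  by apply: f_seg => // c'; rewrite inE => /predU1P[->|/noC].
have f_sc : enorm (f c - f s) <= (c - s) * K.
  apply: f_seg (ltW sc) _ => c'; rewrite inE => /predU1P[->|/noC].
    by rewrite ltxx andbF.
  by apply: contra => /andP[-> c'c]; rewrite (lt_trans c'c ct).
have f_ct : enorm (f t - f c) <= (t - c) * K.
  apply: f_seg (ltW ct) _ => c'; rewrite inE => /predU1P[->|/noC].
    by rewrite ltxx.
  by apply: contra => /andP[cc' ->]; rewrite (lt_trans sc cc').
rewrite -(subrK (f c) (f t)) -addrA; apply: le_trans (enormD _ _) _.
by rewrite (_ : (t - s) * K = (t - c) * K + (c - s) * K) ?lerD //; ring.
Qed.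

End PiecewiseLipschitz.

Section MaxFilterBank.
Variables (R : realType) (d : nat) (G : seq 'M[R]_d).
Hypothesis G_orth : is_finite_orth_group G.
Implicit Types (x y z : 'cV[R]_d).

Lemma orbit_mulmx (h : 'M[R]_d) x :
  h \in G -> Defs.orbit G (h *m x) = Defs.orbit G x.
Proof.
case: G_orth => _ GM GT GO hG; apply/seteqP; split => _ [g gG <-].
  by exists (g *m h); [exact: GM | rewrite mulmxA].
exists (g *m h^T); first exact: GM (GT _ hG).
by rewrite -mulmxA (mulmxA h^T) GO // mul1mx.
Qed.

Lemma orbit_pair_max (F : 'cV[R]_d -> 'cV[R]_d -> R) x y :
  exists g h, [/\ g \in G, h \in G &
    {in G &, forall g' h', F (g' *m x) (h' *m y) <= F (g *m x) (h *m y)}].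
Proof.
have [G1 _ _ _] := G_orth.
pose F' (gh : seq_sub G * seq_sub G) := F (val gh.1 *m x) (val gh.2 *m y).
have [[g h] _ gh_max] := @arg_maxP _ _ _ (SeqSub G1, SeqSub G1) predT F' isT.
exists (val g), (val h); split; [exact: valP | exact: valP |].
by move=> g' h' g'G h'G; apply: (gh_max (SeqSub g'G, SeqSub h'G)).
Qed.

Lemma maxfilt_pair z x : exists g h, [/\ g \in G, h \in G,
  maxfilt G z x = dotv (g *m z) (h *m x) &
  {in G &, forall g' h', dotv (g' *m z) (h' *m x) <= dotv (g *m z) (h *m x)}].
Proof.
have [g [h [gG hG gh_max]]] := orbit_pair_max (@dotv R d) z x.
exists g, h; split => //; apply: sup_greatest.
  by exists (g *m z), (h *m x); split => //; [exists g | exists h].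
by move=> _ [_ [_ [[g' g'G <-] [h' h'G <-] ->]]]; exact: gh_max.
Qed.

Lemma maxfilt_ge z x (g : 'M[R]_d) : g \in G -> dotv (g *m z) x <= maxfilt G z x.
Proof.
have [G1 _ _ _] := G_orth.
move=> gG; have [g' [h' [_ _ -> gh_max]]] := maxfilt_pair z x.
by rewrite -{1}(mul1mx x) gh_max.
Qed.

Lemma maxfilt_attained z x : exists g, g \in G /\ maxfilt G z x = dotv (g *m z) x.
Proof.
have [_ GM GT _] := G_orth.
have [g [h [gG hG -> _]]] := maxfilt_pair z x.
exists (h^T *m g); split; first exact: GM (GT _ hG) gG.
by rewrite -mulmxA [RHS]dotv_mulmxl trmxK.
Qed.

Lemma qdist_pair x y : exists g h, [/\ g \in G, h \in G,
  qdist G x y = enorm (g *m x - h *m y) &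
  {in G &, forall g' h', enorm (g *m x - h *m y) <= enorm (g' *m x - h' *m y)}].
Proof.
have [g [h [gG hG gh_min]]] := orbit_pair_max (fun p q => - enorm (p - q)) x y.
have {}gh_min :
    {in G &, forall g' h', enorm (g *m x - h *m y) <= enorm (g' *m x - h' *m y)}.
  by move=> g' h' g'G h'G; rewrite -lerN2 gh_min.
exists g, h; split => //; apply: inf_least.
  by exists (g *m x), (h *m y); split => //; [exists g | exists h].
by move=> _ [_ [_ [[g' g'G <-] [h' h'G <-] ->]]]; exact: gh_min.
Qed.

Lemma qdist_ge0 x y : 0 <= qdist G x y.
Proof. by have [g [h [_ _ -> _]]] := qdist_pair x y; exact: enorm_ge0. Qed.

Lemma voronoiP (g : 'M[R]_d) z y : g \in G ->
  voronoi G (g *m z) y <->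
  (forall h, h \in G -> h *m z != g *m z -> dotv (h *m z) y < dotv (g *m z) y).
Proof.
move=> gG; rewrite /voronoi orbit_mulmx //=; split.
  move=> [gz_max gz_uniq] h hG hzN; rewrite lt_neqAle gz_max ?andbT; last by exists h.
  by apply: contra_neq hzN; apply: gz_uniq; exists h.
move=> gz_max; split=> [_ [h hG <-]|_ [h hG <-] hz_eq].
  by have [->|hzN] := eqVneq (h *m z) (g *m z); [exact: lexx | exact/ltW/gz_max].
have [//|hzN] := eqVneq (h *m z) (g *m z).
by move: (gz_max h hG hzN); rewrite hz_eq ltxx.
Qed.

Variables (n : nat) (z : 'I_n -> 'cV[R]_d).
Implicit Type g : 'I_n -> 'M[R]_d.

Definition orbit_diffs : seq 'cV[R]_d :=
  flatten [seq [seq p *m z i - q *m z i | p <- G, q <- G] | i <- enum 'I_n].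

Lemma mem_orbit_diffs i (g h : 'M[R]_d) :
  g \in G -> h \in G -> g *m z i - h *m z i \in orbit_diffs.
Proof.
move=> gG hG; apply/flattenP; exists [seq p *m z i - q *m z i | p <- G, q <- G].
  by apply/mapP; exists i; rewrite ?mem_enum.
by apply/allpairsP; exists (g, h).
Qed.

Definition maximizers g y :=
  forall i h, h \in G -> dotv (h *m z i) y <= dotv (g i *m z i) y.

Lemma Phi_orbit x y : Defs.orbit G x = Defs.orbit G y -> Phi G z x = Phi G z y.
Proof. by move=> xy_orbit; rewrite /Phi /maxfilt xy_orbit. Qed.

Lemma Phi_mulmx (h : 'M[R]_d) x : h \in G -> Phi G z (h *m x) = Phi G z x.
Proof. by move=> hG; apply/Phi_orbit/orbit_mulmx. Qed.

Lemma trmx_colmat_mulmx g y i : ((colmat g z)^T *m y) i 0 = dotv (g i *m z i) y.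
Proof. by rewrite mxE; apply: eq_bigr => a _; rewrite !mxE. Qed.

Lemma Phi_maximizers g y : (forall i, g i \in G) -> maximizers g y ->
  Phi G z y = (colmat g z)^T *m y.
Proof.
move=> gG g_max; apply/matrixP => i j; rewrite (ord1 j) trmx_colmat_mulmx mxE.
apply/le_anti/andP; split; last exact: maxfilt_ge.
by have [h [hG ->]] := maxfilt_attained (z i) y; exact: g_max.
Qed.

Lemma voronoi_maximizers g y : (forall i, g i \in G) ->
  (forall i, voronoi G (g i *m z i) y) -> maximizers g y.
Proof.
move=> gG y_vor i h hG.
have [->|hzN] := eqVneq (h *m z i) (g i *m z i); first exact: lexx.
exact/ltW/((voronoiP _ _ (gG i)).1 (y_vor i)).
Qed.

Lemma maximizers_near_voronoi g y u : (forall i, g i \in G) ->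
  (forall i, voronoi G (g i *m z i) y) ->
  exists2 eta : R, 0 < eta & maximizers g (y + eta *: u).
Proof.
move=> gG y_vor; have [eta eta_gt0 sign] := dotv_perturb_sign orbit_diffs y u.
exists eta => // i h hG.
have [->|hzN] := eqVneq (h *m z i) (g i *m z i); first exact: lexx.
rewrite -subr_le0 -dotvBl ltW //.
apply: (sign _ (mem_orbit_diffs i hG (gG i))).1.
by rewrite dotvBl subr_lt0; exact: ((voronoiP _ _ (gG i)).1 (y_vor i)).
Qed.

Lemma exists_admissible_maximizers y : exists g, admissible G z g /\ maximizers g y.
Proof.
have [w w_gen] := generic_direction orbit_diffs.
have [eta eta_gt0 sign] := dotv_perturb_sign orbit_diffs y w.
set q := y + eta *: w.
have [g g_max] := choice (fun i => maxfilt_attained (z i) q).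
have gG i : g i \in G by case: (g_max i).
have q_max i (h : 'M[R]_d) : h \in G -> dotv (h *m z i) q <= dotv (g i *m z i) q.
  by case: (g_max i) => _ <-; exact: maxfilt_ge.
exists g; split.
  split=> //; exists q => i; apply/voronoiP => // h hG hzN.
  rewrite lt_neqAle q_max // andbT -subr_eq0 -dotvBl.
  have a_in := mem_orbit_diffs i hG (gG i).
  have [ay0|] := eqVneq (dotv (h *m z i - g i *m z i) y) 0.
    by rewrite dotvDr dotvZr ay0 add0r mulf_eq0 negb_or gt_eqF // w_gen // subr_eq0.
  rewrite neq_lt => /orP[/(sign _ a_in).1|/(sign _ a_in).2]; first exact: ltr0_neq0.
  exact: lt0r_neq0.
move=> i h hG; rewrite -subr_le0 -dotvBl leNgt; apply/negP.
move=> /(sign _ (mem_orbit_diffs i hG (gG i))).2.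
by rewrite dotvBl subr_gt0 ltNge q_max.
Qed.

Lemma exists_max_admissible : exists g, admissible G z g /\
  forall g', admissible G z g' -> opnorm (colmat g' z) <= opnorm (colmat g z).
Proof.
pose val_fun (k : {ffun 'I_n -> seq_sub G}) i := val (k i).
have val_funK g : (forall i, g i \in G) -> exists k, val_fun k = g.
  move=> gG; exists [ffun i => SeqSub (gG i)].
  by apply: funext => i; rewrite /val_fun ffunE.
have [g0 [g0_adm _]] := exists_admissible_maximizers 0.
have [k0 k0E] := val_funK _ g0_adm.1.
pose P k := `[< admissible G z (val_fun k) >].
have Pk0 : P k0 by apply/asboolP; rewrite k0E.
have [k /asboolP k_adm k_max] := arg_maxP (fun k => opnorm (colmat (val_fun k) z)) Pk0.
exists (val_fun k); split=> // g' g'_adm.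
have [k' k'E] := val_funK _ g'_adm.1; rewrite -k'E; apply: k_max.
by apply/asboolP; rewrite k'E.
Qed.

Lemma lip_quotients_ge0 r : lip_quotients G z r -> 0 <= r.
Proof. by move=> [x [y [_ ->]]]; rewrite divr_ge0 ?enorm_ge0 ?qdist_ge0. Qed.

Lemma lip_quotients_nonempty : (0 < d)%N -> lip_quotients G z !=set0.
Proof.
move=> d_gt0; have [G1 _ _ _] := G_orth; pose e : 'cV[R]_d := const_mx 1.
exists (enorm (Phi G z 0 - Phi G z e) / qdist G 0 e), 0, e; split=> // orbit_eq.
have : Defs.orbit G 0 e by rewrite orbit_eq; exists 1%:M; rewrite ?mul1mx.
case=> h _; rewrite mulmx0 => /matrixP/(_ (Ordinal d_gt0) 0)/eqP.
by rewrite !mxE eq_sym oner_eq0.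
Qed.

Lemma lip_quotients_ge g u : admissible G z g ->
  0 < enorm ((colmat g z)^T *m u) ->
  exists2 r, lip_quotients G z r & enorm ((colmat g z)^T *m u) <= r * enorm u.
Proof.
have [G1 _ _ _] := G_orth.
move=> [gG [y y_vor]]; set ATu := enorm _ => ATu_gt0.
have [eta eta_gt0 g_max] := maximizers_near_voronoi u gG y_vor.
set y' := y + eta *: u.
have y'_sub : y' - y = eta *: u by rewrite addrAC subrr add0r.
set E := enorm (Phi G z y' - Phi G z y).
have E_eq : E = eta * ATu.
  rewrite /E (Phi_maximizers gG g_max) (Phi_maximizers gG (voronoi_maximizers gG y_vor)).
  by rewrite -mulmxBr y'_sub -scalemxAr enormZ gtr0_norm.
have E_gt0 : 0 < E by rewrite E_eq mulr_gt0.
have [g' [h' [g'G h'G q_eq q_min]]] := qdist_pair y' y.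
have q_le : qdist G y' y <= eta * enorm u.
  by rewrite q_eq; move: (q_min _ _ G1 G1); rewrite !mul1mx y'_sub enormZ gtr0_norm.
have q_gt0 : 0 < qdist G y' y.
  rewrite lt_def qdist_ge0 andbT q_eq enorm_eq0 subr_eq0.
  apply: contraTneq E_gt0 => g'y'_eq.
  by rewrite /E -(Phi_mulmx y' g'G) g'y'_eq Phi_mulmx // subrr enorm0 ltxx.
exists (E / qdist G y' y).
  exists y', y; split=> // orbit_eq.
  by move: E_gt0; rewrite /E (Phi_orbit orbit_eq) subrr enorm0 ltxx.
rewrite mulrAC ler_pdivlMr // E_eq; nra.
Qed.

Section UpperBound.
Variable L : R.
Hypothesis L_ub : forall g, admissible G z g -> opnorm (colmat g z) <= L.

Lemma Phi_sub_le_segment x D s t : s <= t ->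
  {in orbit_diffs, forall a, dotv a D != 0 -> ~~ (s < - dotv a x / dotv a D < t)} ->
  enorm (Phi G z (x + t *: D) - Phi G z (x + s *: D)) <= (t - s) * (L * enorm D).
Proof.
rewrite le_eqVlt => /predU1P[<- _|s_lt_t no_root]; first by rewrite !subrr enorm0 mul0r.
set m := (s + t) / 2.
have m_in : s < m < t by apply/andP; split; rewrite /m; lra.
have [g [g_adm g_max]] := exists_admissible_maximizers (x + m *: D).
have gG := g_adm.1.
have g_seg r : s <= r <= t -> maximizers g (x + r *: D).
  move=> r_in i h hG; rewrite -subr_le0 -dotvBl dotvDr dotvZr.
  have a_in := mem_orbit_diffs i hG (gG i).
  apply: affine_nonpos_between m_in r_in (no_root _ a_in) _.
  by rewrite -dotvZr -dotvDr dotvBl subr_le0 g_max.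
have [s_in t_in] : s <= s <= t /\ s <= t <= t by rewrite !lexx ltW.
rewrite (Phi_maximizers gG (g_seg t t_in)) (Phi_maximizers gG (g_seg s s_in)).
rewrite -mulmxBr opprD addrACA subrr add0r -scalerBl.
apply: le_trans (enorm_trmx_mulmx_le _ _) _.
have ts_ge0 : 0 <= t - s by rewrite subr_ge0 ltW.
by rewrite enormZ ger0_norm // mulrCA ler_wpM2l // ler_wpM2r ?enorm_ge0 ?L_ub.
Qed.

Lemma Phi_lipschitz x y : enorm (Phi G z y - Phi G z x) <= L * enorm (y - x).
Proof.
set D := y - x.
pose C := [seq - dotv a x / dotv a D | a <- orbit_diffs & dotv a D != 0].
have := @enorm_sub_le_piecewise _ _ (fun r => Phi G z (x + r *: D)) C (L * enorm D)
  _ 0 1 ler01.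
rewrite scale1r scale0r addr0 subr0 mul1r (addrC x) /D subrK; apply.
move=> s t st no_break; apply: Phi_sub_le_segment => // a a_in aDN0.
by apply: no_break; apply/mapP; exists a; rewrite // mem_filter aDN0.
Qed.

Lemma Phi_lipschitz_qdist x y : enorm (Phi G z x - Phi G z y) <= L * qdist G x y.
Proof.
have [g [h [gG hG -> _]]] := qdist_pair x y.
by rewrite -(Phi_mulmx x gG) -(Phi_mulmx y hG) Phi_lipschitz.
Qed.

Lemma lip_quotients_le : ubound (lip_quotients G z) L.
Proof.
move=> _ [x [y [_ ->]]]; have [q0|qN0] := eqVneq (qdist G x y) 0.
  have [g [g_adm _]] := exists_admissible_maximizers 0.
  by rewrite q0 invr0 mulr0 (le_trans (opnorm_ge0 _) (L_ub g_adm)).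
have q_gt0 : 0 < qdist G x y by rewrite lt_def qN0 qdist_ge0.
by rewrite ler_pdivrMr // Phi_lipschitz_qdist.
Qed.

End UpperBound.
End MaxFilterBank.

Unset Implicit Arguments.

Theorem theorem14 (R : realType) (d n : nat) (G : seq 'M[R]_d)
  (z : 'I_n -> 'cV[R]_d) :
  (0 < d)%N -> is_finite_orth_group G ->
  exists g : 'I_n -> 'M[R]_d,
    [/\ admissible G z g,
        (forall g', admissible G z g' -> opnorm (colmat g' z) <= opnorm (colmat g z)),
        has_sup (lip_quotients G z) &
        sup (lip_quotients G z) = opnorm (colmat g z)].
Proof.
move=> d_gt0 G_orth.
have [g [g_adm g_max]] := exists_max_admissible G_orth z.
have LQ_ne := lip_quotients_nonempty G_orth z d_gt0.
have LQ_le := lip_quotients_le G_orth g_max.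
have LQ_sup : has_sup (lip_quotients G z) by split; last exists (opnorm (colmat g z)).
exists g; split=> //; apply/le_anti/andP; split; first exact: ge_sup.
apply: opnorm_le_ub => v v_le1; set A := colmat g z.
have [Av0|AvN0] := eqVneq (enorm (A *m v)) 0.
  have [r r_in] := LQ_ne.
  by rewrite Av0 (le_trans (lip_quotients_ge0 G_orth r_in) (ub_le_sup LQ_sup.2 r_in)).
have Av_gt0 : 0 < enorm (A *m v) by rewrite lt_def AvN0 enorm_ge0.
have Av_sqr_le := enorm_mulmx_sqr_le A v_le1.
have ATAv_gt0 := lt_le_trans (exprn_gt0 2 Av_gt0) Av_sqr_le.
have [r r_in r_ge] := lip_quotients_ge G_orth g_adm ATAv_gt0.
apply: le_trans (ub_le_sup LQ_sup.2 r_in).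
by rewrite -(ler_pM2r Av_gt0) -expr2 (le_trans Av_sqr_le r_ge).
Qed.
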